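(* Under the standing setup with $\mathrm{Var}(X_N)>0$, the following bounds on $Y^0$ hold and each is sharp under its stated sign assumptions (absent additional information): (1) if $\delta_B\ge0$: $Y^0\in[Y^{0-}_{MOB},Y^0_{NM}]$; if $\delta_B\le0$: $Y^0\in[Y^0_{NM},Y^{0+}_{MOB}]$; (2) if $\delta_W\ge0$: $Y^0\in[\max\{Y^0_{ER},Y^{0-}_{MOB}\},Y^{0+}_{MOB}]$; if $\delta_W\le0$: $Y^0\in[Y^{0-}_{MOB},\min\{Y^0_{ER},Y^{0+}_{MOB}\}]$; (3) if $\delta_W\ge0$ and $\delta_B\ge0$: $\max\{Y^0_{ER},Y^{0-}_{MOB}\}\le Y^0\le Y^0_{NM}$; if $\delta_W\le0$ and $\delta_B\le0$: $Y^0_{NM}\le Y^0\le\min\{Y^0_{ER},Y^{0+}_{MOB}\}$; (4) if $\delta_W\ge0$ and $\delta_B\le0$: $Y^0\in[\max\{Y^{0-}_{MOB},Y^0_{ER},Y^0_{NM}\},Y^{0+}_{MOB}]$; if $\delta_W\le0$ and $\delta_B\ge0$: $Y^0\in[Y^{0-}_{MOB},\min\{Y^0_{NM},Y^0_{ER},Y^{0+}_{MOB}\}]$; (5) if $\delta_W=0$ then $Y^0=Y^0_{ER}$; if $\delta_B=0$ then $Y^0=Y^0_{NM}$; if $\delta_W=\delta_B=0$ then $Y^0=Y^1$.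
   Context: Let $(X,Y,N)$ be a random triple with $X\in\{0,1\}$, $Y$ real-valued, $N$ taking values in a finite set $\mathcal N$. Write $p_n=\Pr(N=n)$, $X_n=\mathbb E[X\mid N=n]$, $Y_n=\mathbb E[Y\mid N=n]$, $X_N=\mathbb E[X\mid N]$, $Y_N=\mathbb E[Y\mid N]$. Assume some $n$ has $p_n>0$ and $X_n\in(0,1)$, and fix reals $\underline Y\le\overline Y$ with $\mathbb E[Y\mid X=x,N=n]\in[\underline Y,\overline Y]$ whenever $\Pr(X=x,N=n)>0$. $Y^x=\mathbb E[Y\mid X=x]$; $\delta_B=\mathbb E[\mathrm{Cov}(Y,X\mid N)]$; $\delta_W=\mathbb E[\mathrm{Cov}(Y,X_N\mid X)]$; $D_{ER}=\mathrm{Cov}(Y_N,X_N)/\mathrm{Var}(X_N)$; $Y^0_{ER}=\mathbb E[Y_N]-D_{ER}\,\mathbb E[X_N]$; $Y^0_{NM}=\mathbb E[(1-X_N)Y_N]/\mathbb E[1-X_N]$; $Y^{0-}_{MOB}=\mathbb E[\max\{Y_N-\overline Y X_N,\underline Y(1-X_N)\}]/(1-\mathbb E[X])$; $Y^{0+}_{MOB}=\mathbb E[\min\{Y_N-\underline Y X_N,\overline Y(1-X_N)\}]/(1-\mathbb E[X])$. Sharpness under an assumption $\mathcal A$: the parameter lies in the interval for every joint distribution satisfying the standing assumptions and $\mathcal A$, and every value in the interval is attained by some joint distribution of $(X,Y,N)$ with the same observed $(p_n,X_n,Y_n)_n$, satisfying the standing bound and $\mathcal A$. *)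

From HB Require Import structures.
From mathcomp Require Import all_boot all_order all_algebra.
From mathcomp Require Import all_classical all_reals all_analysis.
Set Implicit Arguments. Unset Strict Implicit. Unset Printing Implicit Defensive.
Import Order.TTheory GRing.Theory Num.Theory.
Local Open Scope classical_set_scope.
Local Open Scope ring_scope.

Section Defs.
Variables (R : realType) (d : measure_display) (T : measurableType d)
  (P : probability T R) (I : finType)
  (X : T -> bool) (Y : T -> R) (N : T -> I).

Definition Nev (n : I) : set T := [set t | N t = n].
Definition Xev (x : bool) : set T := [set t | X t = x].
Definition XNev (x : bool) (n : I) : set T := [set t | X t = x /\ N t = n].

Definition Pr (A : set T) : R := fine (P A).

(* E[f | A] = E[f 1_A] / Pr(A)  (elementary conditional expectation given an
   event; equals 0 by the convention x/0 = 0 when Pr(A) = 0) *)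
Definition cexp (A : set T) (f : T -> R) : R :=
  fine (\int[P]_(t in A) (f t)%:E)%E / Pr A.

Definition Ex (f : T -> R) : R := cexp setT f.

Definition ccov (A : set T) (f g : T -> R) : R :=
  cexp A (fun t => (f t - cexp A f) * (g t - cexp A g)).

Definition Xr (t : T) : R := (X t)%:R.

Definition p_ (n : I) : R := Pr (Nev n).
Definition X_ (n : I) : R := cexp (Nev n) Xr.
Definition Y_ (n : I) : R := cexp (Nev n) Y.
Definition XN (t : T) : R := X_ (N t).
Definition YN (t : T) : R := Y_ (N t).

Definition Yx (x : bool) : R := cexp (Xev x) Y.

Definition deltaB : R := Ex (fun t => ccov (Nev (N t)) Y Xr).
Definition deltaW : R := Ex (fun t => ccov (Xev (X t)) Y XN).

Definition VarXN : R := ccov setT XN XN.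
Definition D_ER : R := ccov setT YN XN / VarXN.
Definition Y0_ER : R := Ex YN - D_ER * Ex XN.
Definition Y0_NM : R := Ex (fun t => (1 - XN t) * YN t) / Ex (fun t => 1 - XN t).
Definition Y0_MOBm (Ylo Yhi : R) : R :=
  Ex (fun t => Num.max (YN t - Yhi * XN t) (Ylo * (1 - XN t))) / (1 - Ex Xr).
Definition Y0_MOBp (Ylo Yhi : R) : R :=
  Ex (fun t => Num.min (YN t - Ylo * XN t) (Yhi * (1 - XN t))) / (1 - Ex Xr).

Definition standing (Ylo Yhi : R) : Prop :=
  [/\ (forall n, measurable (Nev n)) /\ measurable (Xev true),
      measurable_fun setT Y,
      P.-integrable setT (EFin \o Y),
      (exists n, 0 < p_ n /\ 0 < X_ n < 1)
    & forall x n, 0 < Pr (XNev x n) ->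
        Ylo <= cexp (XNev x n) Y <= Yhi].

End Defs.

Definition same_obs (R : realType) (I : finType)
  (d : measure_display) (T : measurableType d) (P : probability T R)
  (X : T -> bool) (Y : T -> R) (N : T -> I)
  (d' : measure_display) (T' : measurableType d') (P' : probability T' R)
  (X' : T' -> bool) (Y' : T' -> R) (N' : T' -> I) : Prop :=
  forall n, [/\ p_ P' N' n = p_ P N n,
               X_ P' X' N' n = X_ P X N n
             & Y_ P' Y' N' n = Y_ P Y N n].

Definition attained (R : realType) (I : finType)
  (d : measure_display) (T : measurableType d) (P : probability T R)
  (X : T -> bool) (Y : T -> R) (N : T -> I) (Ylo Yhi : R)
  (cond : R -> R -> Prop) (y : R) : Prop :=
  exists (d' : measure_display) (T' : measurableType d')
         (P' : probability T' R) (X' : T' -> bool) (Y' : T' -> R) (N' : T' -> I),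
    [/\ standing P' X' Y' N' Ylo Yhi,
        same_obs P X Y N P' X' Y' N',
        cond (deltaW P' X' Y' N') (deltaB P' X' Y' N')
      & Yx P' X' Y' false = y].

Definition sharp_bounds (R : realType) (I : finType)
  (d : measure_display) (T : measurableType d) (P : probability T R)
  (X : T -> bool) (Y : T -> R) (N : T -> I) (Ylo Yhi : R)
  (cond : R -> R -> Prop) (lo hi : R) : Prop :=
  (cond (deltaW P X Y N) (deltaB P X Y N) -> lo <= Yx P X Y false <= hi)
  /\ (forall y, lo <= y <= hi -> attained P X Y N Ylo Yhi cond y).

(* Everything in the theorem is a function of the cell masses
   q x n = Pr(X = x, N = n) and the cell integrals a x n = E[Y; X = x, N = n],
   and the observables fix q and the sums a 0 n + a 1 n.  In these terms
     Pr(X = 0) (Y0_NM - Y0) = delta_B,    Var(X_N) (Y0 - Y0_ER) = Pr(X = 1) delta_W,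
     delta_W + delta_B = E[X (1 - X_N)] (Y1 - Y0),
   so each sign assumption places Y0 relative to Y0_NM and Y0_ER.  The bounds on the
   cell means confine a 0 n to an interval [cell_lo n, cell_hi n] whose endpoints add
   up to Pr(X = 0) Y0_MOB^- and Pr(X = 0) Y0_MOB^+.  Interpolating between the
   endpoints gives, for every value between the two bounds, a response that is
   constant on cells, has the same observables and attains that value; this is
   sharpness. *)

From HB Require Import structures.
From mathcomp Require Import all_boot all_order all_algebra.
From mathcomp Require Import all_classical all_reals all_analysis.
From mathcomp Require Import ring lra.
Import Order.TTheory GRing.Theory Num.Theory.
Local Open Scope ring_scope.
Set Implicit Arguments. Unset Strict Implicit. Unset Printing Implicit Defensive.

Lemma sum_centered_prod (R : fieldType) (I : finType) (u f g : I -> R) :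
  \sum_n g n != 0 ->
  \sum_n (u n - (\sum_n u n * g n) / \sum_n g n) * (f n - (\sum_n f n) / (\sum_n g n) * g n)
  = \sum_n u n * f n - (\sum_n u n * g n) / (\sum_n g n) * \sum_n f n.
Proof.
move=> g_neq0.
set c := (\sum_n u n * g n) / _; set F := \sum_n f n; set G := \sum_n g n.
rewrite (eq_bigr (fun n => u n * f n + (- c) * f n + (- (F / G)) * (u n * g n)
  + (c * (F / G)) * g n)); last by move=> n _; ring.
by rewrite !big_split /= -!mulr_sumr -/F -/G /c /G /F; field.
Qed.

Lemma exists_mean_in_bounds (R : realFieldType) (lo hi w v : R) :
  lo <= hi -> 0 <= w -> lo * w <= v <= hi * w -> exists2 m, lo <= m <= hi & w * m = v.
Proof.
move=> lo_le_hi; rewrite le_eqVlt => /predU1P[<- | w_gt0].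
  by rewrite !mulr0 -eq_le => /eqP <-; exists lo; rewrite ?lexx ?mul0r.
by exists (v / w); rewrite ?ler_pdivlMr ?ler_pdivrMr // mulrC divfK ?gt_eqF.
Qed.

Lemma sum_interpolate (R : realFieldType) (I : finType) (lo hi : I -> R) (z : R) :
  (forall n, lo n <= hi n) -> \sum_n lo n <= z <= \sum_n hi n ->
  exists v : I -> R, (forall n, lo n <= v n <= hi n) /\ \sum_n v n = z.
Proof.
move=> lo_le_hi /andP[lo_le_z z_le_hi].
set L := \sum_n lo n in lo_le_z *; set H := \sum_n hi n in z_le_hi *.
have [L_lt_H | H_le_L] := ltrP L H; last first.
  exists lo; split=> [n|]; first by rewrite lexx lo_le_hi.
  by apply/le_anti; rewrite lo_le_z (le_trans z_le_hi H_le_L).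
pose t := (z - L) / (H - L).
have HL_gt0 : 0 < H - L by rewrite subr_gt0.
have t_ge0 : 0 <= t by apply: divr_ge0; rewrite subr_ge0 // ltW.
have t_le1 : t <= 1 by rewrite ler_pdivrMr // mul1r lerD2r.
exists (fun n => lo n + t * (hi n - lo n)); split=> [n|].
  have lo_le_hi_n := lo_le_hi n; apply/andP; split; nra.
rewrite big_split /= -mulr_sumr sumrB -/L -/H /t; field.
by rewrite gt_eqF.
Qed.

(* The finite cell model: [q x n] stands for Pr(X = x, N = n) and [a x n] for
   E[Y; X = x, N = n].  A [c]-prefixed name is the cell expression of the quantity
   with the same name without the prefix. *)
Section CellModel.
Variables (R : realFieldType) (I : finType) (q a : bool -> I -> R).

Definition cp n := q false n + q true n.
Definition cX n := q true n / cp n.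
Definition cY n := (a false n + a true n) / cp n.
Definition cEN (f : I -> R) := \sum_n cp n * f n.
Definition cPrX x := \sum_n q x n.
Definition cIntY x := \sum_n a x n.
Definition cYx x := cIntY x / cPrX x.
Definition cEXN2 := cEN (fun n => cX n ^+ 2).
Definition cEXYN := cEN (fun n => cX n * cY n).

Definition cVarXN := cEN (fun n => (cX n - cEN cX) ^+ 2).
Definition cY0_ER :=
  cEN cY - cEN (fun n => (cY n - cEN cY) * (cX n - cEN cX)) / cVarXN * cEN cX.
Definition cY0_NM := cEN (fun n => (1 - cX n) * cY n) / cEN (fun n => 1 - cX n).
Definition cY0_MOBm (Ylo Yhi : R) :=
  cEN (fun n => Num.max (cY n - Yhi * cX n) (Ylo * (1 - cX n))) / (1 - cPrX true).
Definition cY0_MOBp (Ylo Yhi : R) :=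
  cEN (fun n => Num.min (cY n - Ylo * cX n) (Yhi * (1 - cX n))) / (1 - cPrX true).
Definition cdeltaB :=
  \sum_n \sum_(x : bool) (x%:R - cX n) * (a x n - cY n * q x n).
Definition cXNx x := (\sum_n cX n * q x n) / cPrX x.
Definition cdeltaW :=
  \sum_(x : bool) \sum_n (cX n - cXNx x) * (a x n - cYx x * q x n).

Section Identities.
Hypothesis q_ge0 : forall x n, 0 <= q x n.
Hypothesis a_null : forall x n, q x n = 0 -> a x n = 0.
Hypothesis sum_cp : \sum_n cp n = 1.
Hypothesis PrX0_gt0 : 0 < cPrX false.
Hypothesis PrX1_gt0 : 0 < cPrX true.

Lemma cp_ge0 n : 0 <= cp n.
Proof. exact: addr_ge0. Qed.

Lemma cp_eq0 n : cp n = 0 -> q false n = 0 /\ q true n = 0.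
Proof.
by move/eqP; rewrite /cp paddr_eq0 // => /andP[/eqP-> /eqP->].
Qed.

Lemma cp_cX n : cp n * cX n = q true n.
Proof.
have [cp0|cp_neq0] := eqVneq (cp n) 0; last by rewrite mulrC divfK.
by have [_ ->] := cp_eq0 cp0; rewrite cp0 mul0r.
Qed.

Lemma cp_1subX n : cp n * (1 - cX n) = q false n.
Proof. by rewrite mulrBr mulr1 cp_cX /cp addrK. Qed.

Lemma cp_cY n : cp n * cY n = a false n + a true n.
Proof.
have [cp0|cp_neq0] := eqVneq (cp n) 0; last by rewrite mulrC divfK.
by have [/a_null-> /a_null->] := cp_eq0 cp0; rewrite cp0 mul0r addr0.
Qed.

Lemma cX_le1 n : cX n <= 1.
Proof.
rewrite /cX; have [/cp_eq0[_ ->]|cp_neq0] := eqVneq (cp n) 0; first by rewrite mul0r ler01.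
rewrite ler_pdivrMr ?lt0r ?cp_neq0 ?cp_ge0 // mul1r /cp lerDr //.
Qed.

Lemma cPrX_sum : cPrX false + cPrX true = 1.
Proof. by rewrite /cPrX -big_split. Qed.

Lemma cPrX0_E : 1 - cPrX true = cPrX false.
Proof. by rewrite -cPrX_sum addrK. Qed.

Lemma cEN_cX : cEN cX = cPrX true.
Proof. by apply: eq_bigr => n _; rewrite cp_cX. Qed.

Lemma cEN_1subX : cEN (fun n => 1 - cX n) = cPrX false.
Proof. by apply: eq_bigr => n _; rewrite cp_1subX. Qed.

Lemma cEN_cY : cEN cY = cIntY false + cIntY true.
Proof. by rewrite /cEN (eq_bigr _ (fun n _ => cp_cY n)) big_split. Qed.

Lemma cEXN2_cells : cEXN2 = \sum_n cX n * q true n.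
Proof. by apply: eq_bigr => n _; rewrite -cp_cX; ring. Qed.

Lemma cVarXN_E : cVarXN = cEXN2 - cPrX true ^+ 2.
Proof.
rewrite /cVarXN cEN_cX /cEN (eq_bigr (fun n => cp n * cX n ^+ 2
  + (- 2 * cPrX true) * (cp n * cX n) + cPrX true ^+ 2 * cp n)); last by move=> n _; ring.
rewrite !big_split /= -!mulr_sumr sum_cp -/(cEN cX) cEN_cX -/(cEN _) -/cEXN2; ring.
Qed.

Lemma cCov_E :
  cEN (fun n => (cY n - cEN cY) * (cX n - cEN cX)) = cEXYN - cEN cX * cEN cY.
Proof.
rewrite {1}/cEN (eq_bigr (fun n => cp n * (cX n * cY n) + (- cEN cY) * (cp n * cX n)
  + (- cEN cX) * (cp n * cY n) + (cEN cX * cEN cY) * cp n)); last by move=> n _; ring.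
by rewrite !big_split /= -!mulr_sumr sum_cp -/(cEN cX) -/(cEN cY) -/(cEN _) -/cEXYN; ring.
Qed.

Lemma cY0_ER_E : cY0_ER = cIntY false + cIntY true
  - (cEXYN - cPrX true * (cIntY false + cIntY true)) / cVarXN * cPrX true.
Proof. by rewrite /cY0_ER cCov_E cEN_cX cEN_cY. Qed.

Lemma cEN_1subX_Y : cEN (fun n => (1 - cX n) * cY n) = cIntY false + cIntY true - cEXYN.
Proof.
rewrite -cEN_cY /cEN /cEXYN /cEN -sumrB; apply: eq_bigr => n _; ring.
Qed.

Lemma cY0_NM_E : cY0_NM = (cIntY false + cIntY true - cEXYN) / cPrX false.
Proof. by rewrite /cY0_NM cEN_1subX_Y cEN_1subX. Qed.

Lemma cdeltaB_E : cdeltaB = cIntY true - cEXYN.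
Proof.
rewrite /cdeltaB /cIntY /cEXYN /cEN -sumrB; apply: eq_bigr => n _.
rewrite big_bool /= -[q false n]cp_1subX -[q true n]cp_cX.
have -> : a false n = cp n * cY n - a true n by rewrite cp_cY; ring.
ring.
Qed.

Lemma cdeltaW_E : cdeltaW = cEXYN - cEXN2 / cPrX true * cIntY true
  - (cPrX true - cEXN2) / cPrX false * cIntY false.
Proof.
rewrite /cdeltaW big_bool /= /cXNx /cYx /cIntY /cPrX.
rewrite !sum_centered_prod -/(cPrX _) ?gt_eqF // -!/(cIntY _) -cEXN2_cells.
have -> : \sum_n cX n * q false n = cPrX true - cEXN2.
  by rewrite cEXN2_cells /cPrX -sumrB; apply: eq_bigr => n _; rewrite -cp_1subX -cp_cX; ring.
have -> : \sum_n cX n * a false n = cEXYN - \sum_n cX n * a true n.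
  by rewrite /cEXYN /cEN -sumrB; apply: eq_bigr => n _; rewrite mulrCA cp_cY; ring.
ring.
Qed.

Lemma cdeltaB_NM : cdeltaB = cPrX false * (cY0_NM - cYx false).
Proof. by rewrite cdeltaB_E cY0_NM_E /cYx; field; rewrite gt_eqF. Qed.

Lemma cdeltaW_ER : cVarXN != 0 -> cPrX true * cdeltaW = cVarXN * (cYx false - cY0_ER).
Proof.
move=> var_neq0; have PrX0_gt0' : 0 < 1 - cPrX true by rewrite cPrX0_E.
rewrite cVarXN_E in var_neq0.
rewrite cdeltaW_E cY0_ER_E /cYx cVarXN_E -cPrX0_E.
by field; rewrite var_neq0 !gt_eqF.
Qed.

Lemma cdeltaW_add_cdeltaB :
  cdeltaW + cdeltaB = (cPrX true - cEXN2) * (cYx true - cYx false).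
Proof. by rewrite cdeltaW_E cdeltaB_E /cYx; field; rewrite !gt_eqF. Qed.

Lemma cPrX1_sub_cEXN2_gt0 n0 : 0 < q false n0 -> 0 < q true n0 -> 0 < cPrX true - cEXN2.
Proof.
move=> q0_gt0 q1_gt0.
have -> : cPrX true - cEXN2 = \sum_n q true n * (1 - cX n).
  by rewrite cEXN2_cells /cPrX -sumrB; apply: eq_bigr => n _; ring.
rewrite (bigD1 n0) //=; apply: ltr_wpDr.
  by apply: sumr_ge0 => n _; rewrite mulr_ge0 ?subr_ge0 ?cX_le1.
rewrite mulr_gt0 // subr_gt0 /cX ltr_pdivrMr ?addr_gt0 // mul1r /cp ltrDr //.
Qed.
End Identities.

Section ManskiBounds.
Variables (Ylo Yhi : R).
Hypothesis q_ge0 : forall x n, 0 <= q x n.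
Hypothesis a_bound : forall x n, Ylo * q x n <= a x n <= Yhi * q x n.
Hypothesis sum_cp : \sum_n cp n = 1.
Hypothesis PrX0_gt0 : 0 < cPrX false.

Lemma a_null x n : q x n = 0 -> a x n = 0.
Proof.
by move=> q0; have := a_bound x n; rewrite q0 !mulr0 => ?; apply/eqP; rewrite eq_le andbC.
Qed.

Definition cell_lo n := Num.max (a false n + a true n - Yhi * q true n) (Ylo * q false n).
Definition cell_hi n := Num.min (a false n + a true n - Ylo * q true n) (Yhi * q false n).

(* [cell_lo n, cell_hi n] is the set of values of [q false n * m0] over all cell
   means [m0, m1] in [Ylo, Yhi] with [q false n * m0 + q true n * m1 = a false n + a true n]. *)
Lemma cell_rangeP n v :
  cell_lo n <= v <= cell_hi n <->
  Ylo * q false n <= v <= Yhi * q false n /\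
  Ylo * q true n <= a false n + a true n - v <= Yhi * q true n.
Proof.
rewrite /cell_lo /cell_hi ge_max le_min.
split=> [/and3P[/andP[h1 h2] h3 h4] | [/andP[h1 h2] /andP[h3 h4]]].
  by split; apply/andP; split; lra.
by apply/and3P; split; [apply/andP; split | |]; lra.
Qed.

Lemma cell_lo_a0_hi n : cell_lo n <= a false n <= cell_hi n.
Proof. by apply/cell_rangeP; rewrite addrAC subrr add0r; split; apply: a_bound. Qed.

Lemma cY_bound n : 0 < cp n -> Ylo <= cY n <= Yhi.
Proof.
move=> cp_gt0; have := a_bound false n; have := a_bound true n.
move=> /andP[h1 h2] /andP[h3 h4].
by rewrite /cY ler_pdivlMr // ler_pdivrMr // /cp; apply/andP; split; lra.
Qed.

Lemma cell_lo_NM_hi n : cell_lo n <= q false n * cY n <= cell_hi n.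
Proof.
apply/cell_rangeP.
have -> : a false n + a true n - q false n * cY n = q true n * cY n.
  by rewrite -(cp_cY q_ge0 a_null) /cp; ring.
have [cp0 | cp_neq0] := eqVneq (cp n) 0.
  by have [-> ->] := cp_eq0 q_ge0 cp0; rewrite !mulr0 !mul0r lexx.
have /andP[lo_Y Y_hi] : Ylo <= cY n <= Yhi.
  by apply: cY_bound; rewrite lt0r cp_neq0 cp_ge0.
have q0_ge0 := q_ge0 false n; have q1_ge0 := q_ge0 true n.
by split; apply/andP; split; nra.
Qed.

Lemma cY0_MOBm_E : cY0_MOBm Ylo Yhi = (\sum_n cell_lo n) / cPrX false.
Proof.
rewrite /cY0_MOBm (cPrX0_E sum_cp); congr (_ / _); apply: eq_bigr => n _.
rewrite maxr_pMr ?cp_ge0 // mulrBr (cp_cY q_ge0 a_null).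
by rewrite [cp n * (Yhi * _)]mulrCA [cp n * (Ylo * _)]mulrCA (cp_cX q_ge0) (cp_1subX q_ge0).
Qed.

Lemma cY0_MOBp_E : cY0_MOBp Ylo Yhi = (\sum_n cell_hi n) / cPrX false.
Proof.
rewrite /cY0_MOBp (cPrX0_E sum_cp); congr (_ / _); apply: eq_bigr => n _.
rewrite minr_pMr ?cp_ge0 // mulrBr (cp_cY q_ge0 a_null).
by rewrite [cp n * (Ylo * _)]mulrCA [cp n * (Yhi * _)]mulrCA (cp_cX q_ge0) (cp_1subX q_ge0).
Qed.

Lemma cY0_NM_cells : cY0_NM = (\sum_n q false n * cY n) / cPrX false.
Proof.
rewrite /cY0_NM cEN_1subX //; congr (_ / _); apply: eq_bigr => n _.
by rewrite mulrA (cp_1subX q_ge0).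
Qed.

Lemma cYx0_MOB : cY0_MOBm Ylo Yhi <= cYx false <= cY0_MOBp Ylo Yhi.
Proof.
rewrite cY0_MOBm_E cY0_MOBp_E /cYx /cIntY !ler_pM2r ?invr_gt0 //.
by apply/andP; split; apply: ler_sum => n _; have /andP[] := cell_lo_a0_hi n.
Qed.

Lemma cY0_NM_MOB : cY0_MOBm Ylo Yhi <= cY0_NM <= cY0_MOBp Ylo Yhi.
Proof.
rewrite cY0_MOBm_E cY0_MOBp_E cY0_NM_cells !ler_pM2r ?invr_gt0 //.
by apply/andP; split; apply: ler_sum => n _; have /andP[] := cell_lo_NM_hi n.
Qed.

Lemma cY0_MOB_attained y : Ylo <= Yhi -> cY0_MOBm Ylo Yhi <= y <= cY0_MOBp Ylo Yhi ->
  exists m : bool -> I -> R,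
    [/\ forall x n, Ylo <= m x n <= Yhi,
        forall n, q false n * m false n + q true n * m true n = a false n + a true n
      & (\sum_n q false n * m false n) / cPrX false = y].
Proof.
move=> lo_le_hi y_in.
have [v [v_in v_sum]] : exists v : I -> R,
    (forall n, cell_lo n <= v n <= cell_hi n) /\ \sum_n v n = y * cPrX false.
  apply: sum_interpolate => [n|].
    by have /andP[h1 h2] := cell_lo_a0_hi n; exact: le_trans h1 h2.
  by move: y_in; rewrite cY0_MOBm_E cY0_MOBp_E ler_pdivrMr // ler_pdivlMr.
have /choice[m m_spec] : forall n, exists mn : R * R,
    [/\ Ylo <= mn.1 <= Yhi, Ylo <= mn.2 <= Yhi,
        q false n * mn.1 = v n & q true n * mn.2 = a false n + a true n - v n].
  move=> n; have /cell_rangeP[] := v_in n.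
  move=> /(exists_mean_in_bounds lo_le_hi (q_ge0 _ _))[m0 m0_in m0E].
  move=> /(exists_mean_in_bounds lo_le_hi (q_ge0 _ _))[m1 m1_in m1E].
  by exists (m0, m1).
exists (fun x n => if x then (m n).2 else (m n).1); split => /=.
- by move=> [] n; have [] := m_spec n.
- by move=> n; have [_ _ -> ->] := m_spec n; rewrite addrC subrK.
- rewrite (eq_bigr v); last by move=> n _; have [] := m_spec n.
  by rewrite v_sum mulfK ?gt_eqF.
Qed.
End ManskiBounds.
End CellModel.

Lemma in_XNev (d : measure_display) (T : measurableType d) (I : finType)
    (X : T -> bool) (N : T -> I) x n t :
  (t \in XNev X N x n) = (x == X t) && (n == N t).
Proof.
apply/idP/andP => [/set_mem[-> ->] | [/eqP -> /eqP ->]]; last exact/mem_set.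
by rewrite !eqxx.
Qed.

Section AffineIntegrals.
Variables (R : realType) (d : measure_display) (T : measurableType d) (P : probability T R).
Variables (I : finType) (X : T -> bool) (N : T -> I) (Y : T -> R).
Hypothesis mXN : forall x n, measurable (XNev X N x n).
Hypothesis iY : P.-integrable setT (EFin \o Y).
Local Open Scope ereal_scope.

Lemma integrable_affine (C : set T) (c e : R) :
  measurable C -> P.-integrable C (fun t => (Y t * c + e)%:E).
Proof.
move=> mC; have iYC : P.-integrable C (EFin \o Y) by apply: integrableS iY.
have : P.-integrable C (((EFin \o Y) \* cst c%:E) \+ (EFin \o cst e)).
  by apply: integrableD => //; [exact: integrableZr | exact: finite_measure_integrable_cst].
by apply: eq_integrable => // t _ /=; rewrite EFinD EFinM.
Qed.

Lemma integral_affine (C : set T) (c e : R) : measurable C ->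
  \int[P]_(t in C) (Y t * c + e)%:E =
  (c * fine (\int[P]_(t in C) (Y t)%:E) + e * Pr P C)%:E.
Proof.
move=> mC; have iYC : P.-integrable C (EFin \o Y) by apply: integrableS iY.
under eq_integral do rewrite EFinD EFinM.
rewrite integralD //; first last.
- exact: finite_measure_integrable_cst.
- exact: integrableZr.
rewrite integralZr // integral_cst // EFinD !EFinM /Pr.
by rewrite !fineK ?fin_num_measure ?(integrable_fin_num _ iYC) // muleC.
Qed.

Lemma integral_affine_cells (g k : bool -> I -> R) :
  \int[P]_t (Y t * g (X t) (N t) + k (X t) (N t))%:E =
  (\sum_(x : bool) \sum_(n : I)
     (g x n * fine (\int[P]_(t in XNev X N x n) (Y t)%:E)
      + k x n * Pr P (XNev X N x n)))%:E.
Proof.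
rewrite (eq_integral (fun t => \sum_(x : bool) \sum_(n : I)
   ((fun t => (Y t * g x n + k x n)%:E) \_ (XNev X N x n)) t)); last first.
  move=> t _; rewrite (bigD1 (X t)) //= (bigD1 (N t)) //= patchE in_XNev !eqxx.
  rewrite big1 ?adde0 => [|n /negbTE nN]; last by rewrite patchE in_XNev nN andbF.
  rewrite big1 ?adde0 // => x /negbTE xX; apply: big1 => n _.
  by rewrite patchE in_XNev xX.
rewrite integral_sum //; last first.
  move=> x; apply: (@integrable_sum _ _ _ _ _ measurableT) => n _.
  exact/(integrable_mkcond _ (mXN x n)).1/integrable_affine.
rewrite -sumEFin; apply: eq_bigr => x _.
rewrite integral_sum //; last first.
  by move=> n; apply/(integrable_mkcond _ (mXN x n)).1/integrable_affine.
rewrite -sumEFin; apply: eq_bigr => n _.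
by rewrite -integral_mkcond integral_affine.
Qed.

Lemma integral_affine_cells_in (A : set T) (ind : bool -> I -> bool) (f : T -> R)
    (g k : bool -> I -> R) :
  (forall t, A t <-> ind (X t) (N t)) ->
  (forall t, f t = Y t * g (X t) (N t) + k (X t) (N t))%R ->
  \int[P]_(t in A) (f t)%:E =
  (\sum_(x : bool) \sum_(n : I)
     (if ind x n then g x n * fine (\int[P]_(t in XNev X N x n) (Y t)%:E)
                      + k x n * Pr P (XNev X N x n) else 0))%:E.
Proof.
move=> AE fE; pose restr (h : bool -> I -> R) x n := if ind x n then h x n else 0%R.
rewrite integral_mkcond (eq_integral (fun t =>
  (Y t * restr g (X t) (N t) + restr k (X t) (N t))%:E)); last first.
  move=> t _; rewrite patchE /restr.
  case: ifPn => [/set_mem/AE -> | /negP tA]; first by rewrite fE.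
  have /negbTE -> : ~~ ind (X t) (N t) by apply/negP => /AE/mem_set/tA.
  by rewrite mulr0 addr0.
rewrite integral_affine_cells; congr (_%:E); apply: eq_bigr => x _.
by apply: eq_bigr => n _; rewrite /restr; case: ifP; rewrite ?mul0r ?addr0.
Qed.
End AffineIntegrals.

Lemma sum_cells (R : nmodType) (I : finType) (F : bool -> I -> R) :
  \sum_(x : bool) \sum_(n : I) F x n = \sum_n (F false n + F true n).
Proof. by rewrite big_bool /= addrC -big_split. Qed.

Lemma sum_cells_X (R : nmodType) (I : finType) (x0 : bool) (F : bool -> I -> R) :
  \sum_(x : bool) \sum_(n : I) (if x == x0 then F x n else 0) = \sum_n F x0 n.
Proof.
by rewrite big_bool; case: x0 => /=; rewrite big1_eq ?addr0 ?add0r.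
Qed.

Lemma sum_cells_N (R : nmodType) (I : finType) (n0 : I) (F : bool -> I -> R) :
  \sum_(x : bool) \sum_(n : I) (if n == n0 then F x n else 0) = F false n0 + F true n0.
Proof. by rewrite big_bool /= -!big_mkcond !big_pred1_eq addrC. Qed.

Section Cells.
Variables (R : realType) (d : measure_display) (T : measurableType d) (P : probability T R).
Variables (I : finType) (X : T -> bool) (N : T -> I).
Hypothesis mN : forall n, measurable (Nev N n).
Hypothesis mX : measurable (Xev X true).

Let iY0 : P.-integrable setT (EFin \o cst (0 : R)).
Proof. exact: finite_measure_integrable_cst. Qed.

Lemma measurable_Xev x : measurable (Xev X x).
Proof.
case: x => //; rewrite (_ : Xev X false = ~` Xev X true)%classic; first exact: measurableC.
by apply/seteqP; split => t; rewrite /Xev /=; case: (X t).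
Qed.

Lemma measurable_XNev x n : measurable (XNev X N x n).
Proof. exact: measurableI (measurable_Xev x) (mN n). Qed.

Definition Pr_cell x n := Pr P (XNev X N x n).
Definition int_cell (Y : T -> R) x n := fine (\int[P]_(t in XNev X N x n) (Y t)%:E)%E.
Local Notation q := Pr_cell.

Lemma Pr_cell_ge0 x n : 0 <= q x n.
Proof. by rewrite fine_ge0 // measure_ge0. Qed.

Lemma Pr_cells (A : set T) (ind : bool -> I -> bool) :
  measurable A -> (forall t, A t <-> ind (X t) (N t)) ->
  Pr P A = \sum_(x : bool) \sum_(n : I) (if ind x n then q x n else 0).
Proof.
move=> mA AE.
have -> : Pr P A = fine (\int[P]_(t in A) ((fun=> 1 : R) t)%:E)%E.
  by rewrite /Pr -[in LHS](mul1e (P A)) -(integral_cst P mA).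
rewrite (integral_affine_cells_in (g := fun _ _ => 0) (k := fun _ _ => 1)
  measurable_XNev iY0 AE) => [/=|t]; last by rewrite mulr0 add0r.
by apply: eq_bigr => x _; apply: eq_bigr => n _; rewrite mul0r mul1r add0r.
Qed.

Lemma cexp_affine_cells (Y : T -> R) (A : set T) (ind : bool -> I -> bool) (f : T -> R)
    (g k : bool -> I -> R) :
  P.-integrable setT (EFin \o Y) -> measurable A ->
  (forall t, A t <-> ind (X t) (N t)) ->
  (forall t, f t = Y t * g (X t) (N t) + k (X t) (N t)) ->
  cexp P A f =
  (\sum_(x : bool) \sum_(n : I)
     (if ind x n then g x n * int_cell Y x n + k x n * q x n else 0)) /
  (\sum_(x : bool) \sum_(n : I) (if ind x n then q x n else 0)).
Proof.
move=> iY mA AE fE.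
by rewrite /cexp (integral_affine_cells_in measurable_XNev iY AE fE) (Pr_cells mA AE).
Qed.

Lemma mem_Nev n t : Nev N n t <-> N t == n.
Proof. by split => [->|/eqP]. Qed.

Lemma mem_Xev x t : Xev X x t <-> X t == x.
Proof. by split => [->|/eqP]. Qed.

Lemma mem_XNev x n t : XNev X N x n t <-> (X t == x) && (N t == n).
Proof. by split => [[-> ->]|/andP[/eqP <- /eqP <-]]; rewrite ?eqxx. Qed.

Lemma sum_cp_Pr_cell : \sum_n cp q n = 1.
Proof.
rewrite -sum_cells -(Pr_cells (ind := fun _ _ => true) measurableT) //.
by rewrite /Pr probability_setT.
Qed.

Lemma Ex_fun_cells (f : T -> R) (k : bool -> I -> R) :
  (forall t, f t = k (X t) (N t)) ->
  Ex P f = \sum_n (k false n * q false n + k true n * q true n).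
Proof.
move=> fE.
rewrite /Ex (cexp_affine_cells (ind := fun _ _ => true) (g := fun _ _ => 0) (k := k)
  iY0 measurableT) // => [|t]; last by rewrite fE mulr0 add0r.
rewrite !sum_cells sum_cp_Pr_cell divr1; apply: eq_bigr => n _.
by rewrite !mul0r !add0r.
Qed.

Lemma Ex_fun_N (f : T -> R) (k : I -> R) :
  (forall t, f t = k (N t)) -> Ex P f = cEN q k.
Proof.
move=> fE; rewrite (@Ex_fun_cells _ (fun _ n => k n)) //.
by apply: eq_bigr => n _; rewrite /cp; ring.
Qed.

Lemma p_cell n : p_ P N n = cp q n.
Proof.
by rewrite /p_ (Pr_cells (ind := fun _ m => m == n) (mN n) (mem_Nev n)) sum_cells_N.
Qed.

Lemma X_cell n : X_ P X N n = cX q n.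
Proof.
rewrite /X_ (cexp_affine_cells (ind := fun _ m => m == n) (g := fun _ _ => 0)
  (k := fun x _ => x%:R) iY0 (mN n) (mem_Nev n)) => [|t]; last by rewrite mulr0 add0r.
by rewrite !sum_cells_N /cX /cp !mul0r !add0r mul1r.
Qed.

Lemma XN_cell t : XN P X N t = cX q (N t).
Proof. exact: X_cell. Qed.

Lemma Pr_Xev_cell x : Pr P (Xev X x) = cPrX q x.
Proof.
by rewrite (Pr_cells (ind := fun x' _ => x' == x) (measurable_Xev x) (mem_Xev x)) sum_cells_X.
Qed.

Lemma Ex_Xr : Ex P (Xr R X) = cPrX q true.
Proof.
rewrite (@Ex_fun_cells _ (fun x _ => x%:R)) //.
by apply: eq_bigr => n _; rewrite mul0r add0r mul1r.
Qed.

Lemma Ex_XN : Ex P (XN P X N) = cEN q (cX q).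
Proof. exact: Ex_fun_N XN_cell. Qed.

Lemma VarXN_cell : VarXN P X N = cVarXN q.
Proof.
rewrite /VarXN /ccov -!/(Ex P _) Ex_XN.
rewrite (@Ex_fun_N _ (fun n => (cX q n - cEN q (cX q)) ^+ 2)) // => t.
by rewrite XN_cell expr2.
Qed.

Section Response.
Variable Y : T -> R.
Hypothesis iY : P.-integrable setT (EFin \o Y).
Local Notation a := (int_cell Y).

Lemma int_cell_null x n : q x n = 0 -> a x n = 0.
Proof.
rewrite /Pr_cell /int_cell /Pr => q0.
have P0 : P (XNev X N x n) = 0%E.
  by move: (fin_num_measure P _ (measurable_XNev x n)) => /fineK <-; rewrite q0.
rewrite null_set_integral //; first exact: measurable_XNev.
exact: measurable_funS measurableT (subsetT _) (measurable_int _ iY).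
Qed.

Lemma Y_cell n : Y_ P Y N n = cY q a n.
Proof.
rewrite /Y_ (cexp_affine_cells (ind := fun _ m => m == n) (g := fun _ _ => 1)
  (k := fun _ _ => 0) iY (mN n) (mem_Nev n)) => [|t]; last by rewrite mulr1 addr0.
by rewrite !sum_cells_N /cY /cp !mul1r !mul0r !addr0.
Qed.

Lemma YN_cell t : YN P Y N t = cY q a (N t).
Proof. exact: Y_cell. Qed.

Lemma Yx_cell x : Yx P X Y x = cYx q a x.
Proof.
rewrite /Yx (cexp_affine_cells (ind := fun x' _ => x' == x) (g := fun _ _ => 1)
  (k := fun _ _ => 0) iY (measurable_Xev x) (mem_Xev x)) => [|t]; last by rewrite mulr1 addr0.
rewrite !sum_cells_X /cYx /cIntY /cPrX; congr (_ / _).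
by apply: eq_bigr => n _; rewrite mul1r mul0r addr0.
Qed.

Lemma Ex_YN : Ex P (YN P Y N) = cEN q (cY q a).
Proof. exact: Ex_fun_N YN_cell. Qed.

Lemma Y0_ER_cell : Y0_ER P X Y N = cY0_ER q a.
Proof.
rewrite /Y0_ER /D_ER VarXN_cell /ccov -!/(Ex P _) Ex_XN Ex_YN (@Ex_fun_N _ (fun n =>
  (cY q a n - cEN q (cY q a)) * (cX q n - cEN q (cX q)))) // => t.
by rewrite XN_cell YN_cell.
Qed.

Lemma Y0_NM_cell : Y0_NM P X Y N = cY0_NM q a.
Proof.
rewrite /Y0_NM (@Ex_fun_N _ (fun n => (1 - cX q n) * cY q a n)) => [|t]; last first.
  by rewrite XN_cell YN_cell.
by rewrite (@Ex_fun_N _ (fun n => 1 - cX q n)) // => t; rewrite XN_cell.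
Qed.

Lemma Y0_MOBm_cell Ylo Yhi : Y0_MOBm P X Y N Ylo Yhi = cY0_MOBm q a Ylo Yhi.
Proof.
rewrite /Y0_MOBm Ex_Xr (@Ex_fun_N _ (fun n =>
  Num.max (cY q a n - Yhi * cX q n) (Ylo * (1 - cX q n)))) // => t.
by rewrite XN_cell YN_cell.
Qed.

Lemma Y0_MOBp_cell Ylo Yhi : Y0_MOBp P X Y N Ylo Yhi = cY0_MOBp q a Ylo Yhi.
Proof.
rewrite /Y0_MOBp Ex_Xr (@Ex_fun_N _ (fun n =>
  Num.min (cY q a n - Ylo * cX q n) (Yhi * (1 - cX q n)))) // => t.
by rewrite XN_cell YN_cell.
Qed.

Lemma ccov_Nev_cell n : cp q n * ccov P (Nev N n) Y (Xr R X) =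
  \sum_(x : bool) (x%:R - cX q n) * (a x n - cY q a n * q x n).
Proof.
rewrite /ccov -/(Y_ P Y N n) -/(X_ P X N n) Y_cell X_cell.
rewrite (cexp_affine_cells (ind := fun _ m => m == n) (g := fun x _ => x%:R - cX q n)
  (k := fun x _ => - cY q a n * (x%:R - cX q n)) iY (mN n) (mem_Nev n)) => [|t]; last first.
  by rewrite /Xr; ring.
rewrite !sum_cells_N big_bool /= -/(cp q n).
have [cp0|cp_neq0] := eqVneq (cp q n) 0; last by rewrite mulrC divfK //; ring.
have [q00 q10] := cp_eq0 Pr_cell_ge0 cp0.
by rewrite cp0 (int_cell_null q00) (int_cell_null q10) q00 q10; ring.
Qed.

Lemma deltaB_cell : deltaB P X Y N = cdeltaB q a.
Proof.
rewrite /deltaB (@Ex_fun_N _ (fun n => ccov P (Nev N n) Y (Xr R X))) //.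
by apply: eq_bigr => n _; rewrite ccov_Nev_cell.
Qed.

Lemma cexp_Xev_XN x : cexp P (Xev X x) (XN P X N) = cXNx q x.
Proof.
rewrite (cexp_affine_cells (ind := fun x' _ => x' == x) (g := fun _ _ => 0)
  (k := fun _ n => cX q n) iY0 (measurable_Xev x) (mem_Xev x)) => [|t]; last first.
  by rewrite XN_cell mulr0 add0r.
rewrite !sum_cells_X /cXNx; congr (_ / _).
by apply: eq_bigr => n _; rewrite mul0r add0r.
Qed.

Lemma ccov_Xev_cell x : cPrX q x != 0 ->
  ccov P (Xev X x) Y (XN P X N) * cPrX q x =
  \sum_n (cX q n - cXNx q x) * (a x n - cYx q a x * q x n).
Proof.
move=> PrX_neq0; rewrite /ccov cexp_Xev_XN -/(Yx P X Y x) Yx_cell.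
rewrite (cexp_affine_cells (ind := fun x' _ => x' == x) (g := fun _ n => cX q n - cXNx q x)
  (k := fun _ n => - cYx q a x * (cX q n - cXNx q x)) iY (measurable_Xev x) (mem_Xev x))
  => [|t]; last by rewrite XN_cell; ring.
rewrite !sum_cells_X -/(cPrX q x) divfK //.
by apply: eq_bigr => n _; ring.
Qed.

Lemma deltaW_cell : cPrX q false != 0 -> cPrX q true != 0 -> deltaW P X Y N = cdeltaW q a.
Proof.
move=> PrX0_neq0 PrX1_neq0.
rewrite /deltaW (@Ex_fun_cells _ (fun x _ => ccov P (Xev X x) Y (XN P X N))) //.
rewrite big_split /= -!mulr_sumr -/(cPrX q false) -/(cPrX q true).
by rewrite !ccov_Xev_cell // /cdeltaW big_bool /= addrC.
Qed.
End Response.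

Definition cell_fun (m : bool -> I -> R) (t : T) : R :=
  \sum_(x : bool) \sum_(n : I) m x n * \1_(XNev X N x n) t.

Lemma cell_funE m t : cell_fun m t = m (X t) (N t).
Proof.
rewrite /cell_fun (bigD1 (X t)) //= (bigD1 (N t)) //= indicE in_XNev !eqxx mulr1.
rewrite big1 ?addr0 => [|n /negbTE nN]; last by rewrite indicE in_XNev nN andbF mulr0.
rewrite big1 ?addr0 // => x /negbTE xX; apply: big1 => n _.
by rewrite indicE in_XNev xX mulr0.
Qed.

Lemma measurable_cell_fun m : measurable_fun setT (cell_fun m).
Proof.
apply: measurable_sum => x; apply: measurable_sum => n.
apply: measurable_realfun.measurable_funM; first exact: measurable_cst.
exact: measurable_realfun.measurable_indic (measurable_XNev x n).
Qed.

Lemma integrable_cell_fun m : P.-integrable setT (EFin \o cell_fun m).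
Proof.
have : P.-integrable setT (fun t => \sum_(x : bool) \sum_(n : I)
    ((m x n)%:E * (\1_(XNev X N x n) t)%:E))%E.
  apply: (@integrable_sum _ _ _ _ _ measurableT) => x _.
  apply: (@integrable_sum _ _ _ _ _ measurableT) => n _.
  exact/integrableZl/integrable_indic/measurable_XNev.
apply: eq_integrable => // t _ /=.
by rewrite -sumEFin; apply: eq_bigr => x _; rewrite -sumEFin.
Qed.

Lemma int_cell_fun m x n : int_cell (cell_fun m) x n = q x n * m x n.
Proof.
rewrite /int_cell (integral_affine_cells_in (ind := fun x' n' => (x' == x) && (n' == n))
  (g := fun _ _ => 0) (k := m) measurable_XNev iY0 (mem_XNev x n)) => [/=|t]; last first.
  by rewrite cell_funE mulr0 add0r.
rewrite (bigD1 x) //= (bigD1 n) //= !eqxx /=.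
rewrite big1 ?addr0 => [|n' /negbTE ->]; last by rewrite ?andbF.
rewrite big1 ?addr0 => [|x' /negbTE ->]; last by rewrite big1.
by rewrite mul0r add0r mulrC.
Qed.

Lemma cexp_cell_fun m x n : 0 < q x n -> cexp P (XNev X N x n) (cell_fun m) = m x n.
Proof.
move=> q_gt0; rewrite /cexp -/(int_cell (cell_fun m) x n) -/(Pr_cell x n) int_cell_fun.
by rewrite mulrC mulKf ?gt_eqF.
Qed.
End Cells.

Section Standing.
Variables (R : realType) (d : measure_display) (T : measurableType d) (P : probability T R).
Variables (I : finType) (X : T -> bool) (Y : T -> R) (N : T -> I) (Ylo Yhi : R).
Hypothesis hst : standing P X Y N Ylo Yhi.
Local Notation q := (Pr_cell P X N).
Local Notation a := (int_cell P X N Y).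

Let mN : forall n, measurable (Nev N n). Proof. by case: hst => -[]. Qed.
Let mX : measurable (Xev X true). Proof. by case: hst => -[]. Qed.
Let iY : P.-integrable setT (EFin \o Y). Proof. by case: hst. Qed.

Lemma a_bound_cells x n : Ylo * q x n <= a x n <= Yhi * q x n.
Proof.
have [q0|q_neq0] := eqVneq (q x n) 0.
  by rewrite q0 (int_cell_null mN mX iY q0) !mulr0 lexx.
have q_gt0 : 0 < q x n by rewrite lt0r q_neq0 Pr_cell_ge0.
have [_ _ _ _ /(_ x n q_gt0)] := hst.
change (Ylo <= a x n / q x n <= Yhi -> Ylo * q x n <= a x n <= Yhi * q x n).
by rewrite ler_pdivlMr // ler_pdivrMr.
Qed.

Lemma mixed_cell : exists n0, 0 < q false n0 /\ 0 < q true n0.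
Proof.
have [_ _ _ [n0 [p_gt0 /andP[X_gt0 X_lt1]]] _] := hst; exists n0.
rewrite (p_cell _ mN mX) in p_gt0; rewrite X_cell // /cX in X_gt0 X_lt1.
split; last by move: X_gt0; rewrite pmulr_lgt0 // invr_gt0.
by move: X_lt1; rewrite ltr_pdivrMr // mul1r /cp ltrDr.
Qed.

Lemma Pr_Xev_gt0 x : 0 < Pr P (Xev X x).
Proof.
rewrite (Pr_Xev_cell _ mN mX); have [n0 [q0_gt0 q1_gt0]] := mixed_cell.
rewrite /cPrX (bigD1 n0) //=; apply: ltr_wpDr; last by case: x.
by apply: sumr_ge0 => n _; exact: Pr_cell_ge0.
Qed.

Let q_ge0 x n : 0 <= q x n. Proof. exact: Pr_cell_ge0. Qed.
Let cPrX_gt0 x : 0 < cPrX q x. Proof. by rewrite -(Pr_Xev_cell _ mN mX) Pr_Xev_gt0. Qed.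
Let sum_cp : \sum_n cp q n = 1. Proof. exact: sum_cp_Pr_cell. Qed.

Lemma Yx0_MOB : Y0_MOBm P X Y N Ylo Yhi <= Yx P X Y false <= Y0_MOBp P X Y N Ylo Yhi.
Proof.
rewrite (Yx_cell mN mX iY) Y0_MOBm_cell // Y0_MOBp_cell //.
exact: cYx0_MOB q_ge0 a_bound_cells sum_cp (cPrX_gt0 false).
Qed.

Lemma Y0_NM_MOB : Y0_MOBm P X Y N Ylo Yhi <= Y0_NM P X Y N <= Y0_MOBp P X Y N Ylo Yhi.
Proof.
rewrite Y0_NM_cell // Y0_MOBm_cell // Y0_MOBp_cell //.
exact: cY0_NM_MOB q_ge0 a_bound_cells sum_cp (cPrX_gt0 false).
Qed.

Lemma deltaB_NM :
  deltaB P X Y N = Pr P (Xev X false) * (Y0_NM P X Y N - Yx P X Y false).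
Proof.
rewrite deltaB_cell // Y0_NM_cell // (Yx_cell mN mX iY) (Pr_Xev_cell _ mN mX).
exact: cdeltaB_NM q_ge0 (a_null a_bound_cells) (cPrX_gt0 false).
Qed.

Lemma deltaW_ER : 0 < VarXN P X N ->
  deltaW P X Y N = VarXN P X N / Pr P (Xev X true) * (Yx P X Y false - Y0_ER P X Y N).
Proof.
move=> VarXN_gt0; rewrite deltaW_cell ?gt_eqF // (Yx_cell mN mX iY) Y0_ER_cell //.
rewrite VarXN_cell // (Pr_Xev_cell _ mN mX); apply: (mulfI (lt0r_neq0 (cPrX_gt0 true))).
rewrite (cdeltaW_ER q_ge0 (a_null a_bound_cells) sum_cp) ?cPrX_gt0 -?VarXN_cell ?gt_eqF //.
by field; rewrite gt_eqF.
Qed.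

Lemma Yx_eq_of_deltas0 :
  deltaW P X Y N = 0 -> deltaB P X Y N = 0 -> Yx P X Y true = Yx P X Y false.
Proof.
rewrite deltaW_cell ?gt_eqF // deltaB_cell // !(Yx_cell mN mX iY) => dW0 dB0.
have [n0 [q0_gt0 q1_gt0]] := mixed_cell.
have H_gt0 := cPrX1_sub_cEXN2_gt0 q_ge0 q0_gt0 q1_gt0.
have /eqP := cdeltaW_add_cdeltaB q_ge0 (a_null a_bound_cells) (cPrX_gt0 false) (cPrX_gt0 true).
by rewrite dW0 dB0 addr0 eq_sym mulf_eq0 (gt_eqF H_gt0) subr_eq0 => /eqP.
Qed.
End Standing.

Section Sharpness.
Variables (R : realType) (d : measure_display) (T : measurableType d) (P : probability T R).
Variables (I : finType) (X : T -> bool) (Y : T -> R) (N : T -> I) (Ylo Yhi : R).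
Hypothesis Ylo_le_Yhi : Ylo <= Yhi.
Hypothesis hst : standing P X Y N Ylo Yhi.
Hypothesis VarXN_gt0 : 0 < VarXN P X N.
Local Notation q := (Pr_cell P X N).

Let mN : forall n, measurable (Nev N n). Proof. by case: hst => -[]. Qed.
Let mX : measurable (Xev X true). Proof. by case: hst => -[]. Qed.
Let iY : P.-integrable setT (EFin \o Y). Proof. by case: hst. Qed.

Lemma standing_cell_fun (m : bool -> I -> R) :
  (forall x n, Ylo <= m x n <= Yhi) -> standing P X (cell_fun X N m) N Ylo Yhi.
Proof.
move=> m_in; have [meas _ _ mixed _] := hst; split => //.
- exact: measurable_cell_fun.
- exact: integrable_cell_fun.
- by move=> x n q_gt0; rewrite cexp_cell_fun.
Qed.

Lemma Y0_ER_NM_obs (Y' : T -> R) : P.-integrable setT (EFin \o Y') ->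
  (forall n, Y_ P Y' N n = Y_ P Y N n) ->
  Y0_ER P X Y' N = Y0_ER P X Y N /\ Y0_NM P X Y' N = Y0_NM P X Y N.
Proof.
move=> iY' Y'_obs; rewrite !Y0_ER_cell // !Y0_NM_cell // /cY0_ER /cY0_NM.
suff -> : cY q (int_cell P X N Y') = cY q (int_cell P X N Y) by [].
by apply/funext => n; rewrite -(Y_cell mN mX iY') -(Y_cell mN mX iY).
Qed.

Lemma MOB_attained (cond : R -> R -> Prop) y :
  Y0_MOBm P X Y N Ylo Yhi <= y <= Y0_MOBp P X Y N Ylo Yhi ->
  cond (VarXN P X N / Pr P (Xev X true) * (y - Y0_ER P X Y N))
       (Pr P (Xev X false) * (Y0_NM P X Y N - y)) ->
  attained P X Y N Ylo Yhi cond y.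
Proof.
rewrite Y0_MOBm_cell // Y0_MOBp_cell // => y_in cond_y.
have PrX0_gt0 : 0 < cPrX q false by rewrite -(Pr_Xev_cell _ mN mX) (Pr_Xev_gt0 hst).
have [m [m_in m_obs m_y]] := cY0_MOB_attained (@Pr_cell_ge0 _ _ _ P _ X N) (a_bound_cells hst)
  (sum_cp_Pr_cell _ mN mX) PrX0_gt0 Ylo_le_Yhi y_in.
pose Y' := cell_fun X N m.
have hst' : standing P X Y' N Ylo Yhi := standing_cell_fun m_in.
have iY' : P.-integrable setT (EFin \o Y') := integrable_cell_fun _ mN mX m.
have Y'_obs n : Y_ P Y' N n = Y_ P Y N n.
  by rewrite (Y_cell mN mX iY') (Y_cell mN mX iY) /cY !int_cell_fun // m_obs.
have Y0' : Yx P X Y' false = y.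
  rewrite (Yx_cell mN mX iY') /cYx /cIntY -m_y; congr (_ / _).
  by apply: eq_bigr => n _; rewrite int_cell_fun.
have [ER' NM'] := Y0_ER_NM_obs iY' Y'_obs.
exists d, T, P, X, Y', N; split; [exact: hst' | by move=> n; split | | exact: Y0'].
by rewrite (deltaW_ER hst' VarXN_gt0) (deltaB_NM hst') Y0' ER' NM'.
Qed.

Lemma sharp_bounds_of_signs (cond : R -> R -> Prop) (lo hi : R) :
  Y0_MOBm P X Y N Ylo Yhi <= lo -> hi <= Y0_MOBp P X Y N Ylo Yhi ->
  (forall y, Y0_MOBm P X Y N Ylo Yhi <= y <= Y0_MOBp P X Y N Ylo Yhi ->
     cond (VarXN P X N / Pr P (Xev X true) * (y - Y0_ER P X Y N))
          (Pr P (Xev X false) * (Y0_NM P X Y N - y)) <-> lo <= y <= hi) ->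
  sharp_bounds P X Y N Ylo Yhi cond lo hi.
Proof.
move=> MOBm_le_lo hi_le_MOBp condE; split.
  by rewrite (deltaW_ER hst VarXN_gt0) (deltaB_NM hst) => /condE; apply; exact: Yx0_MOB hst.
move=> y /andP[lo_le_y y_le_hi].
have y_in : Y0_MOBm P X Y N Ylo Yhi <= y <= Y0_MOBp P X Y N Ylo Yhi.
  by rewrite (le_trans MOBm_le_lo lo_le_y) (le_trans y_le_hi hi_le_MOBp).
by apply: (MOB_attained y_in); apply/(condE y y_in); rewrite lo_le_y.
Qed.
End Sharpness.

Unset Implicit Arguments.

Theorem theorem3 (R : realType) (I : finType)
  (d : measure_display) (T : measurableType d) (P : probability T R)
  (X : T -> bool) (Y : T -> R) (N : T -> I) (Ylo Yhi : R) :
  Ylo <= Yhi ->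
  standing P X Y N Ylo Yhi ->
  0 < VarXN P X N ->
  let dW := deltaW P X Y N in
  let dB := deltaB P X Y N in
  let Y0 := Yx P X Y false in
  let Y1 := Yx P X Y true in
  let ER := Y0_ER P X Y N in
  let NM := Y0_NM P X Y N in
  let MOBm := Y0_MOBm P X Y N Ylo Yhi in
  let MOBp := Y0_MOBp P X Y N Ylo Yhi in
  let SB := sharp_bounds P X Y N Ylo Yhi in
  [/\ (* (1) *)
      SB (fun _ b => 0 <= b) MOBm NM /\ SB (fun _ b => b <= 0) NM MOBp,
      (* (2) *)
      SB (fun w _ => 0 <= w) (Num.max ER MOBm) MOBp /\
      SB (fun w _ => w <= 0) MOBm (Num.min ER MOBp),
      (* (3) *)
      SB (fun w b => 0 <= w /\ 0 <= b) (Num.max ER MOBm) NM /\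
      SB (fun w b => w <= 0 /\ b <= 0) NM (Num.min ER MOBp),
      (* (4) *)
      SB (fun w b => 0 <= w /\ b <= 0) (Num.max MOBm (Num.max ER NM)) MOBp /\
      SB (fun w b => w <= 0 /\ 0 <= b) MOBm (Num.min NM (Num.min ER MOBp))
    & (* (5) *)
      [/\ dW = 0 -> Y0 = ER,
          dB = 0 -> Y0 = NM
        & dW = 0 -> dB = 0 -> Y0 = Y1]].
Proof.
move=> Ylo_le_Yhi hst VarXN_gt0; cbv zeta.
have /andP[MOBm_le_NM NM_le_MOBp] := Y0_NM_MOB hst.
have cW_gt0 : 0 < VarXN P X N / Pr P (Xev X true) by rewrite divr_gt0 ?(Pr_Xev_gt0 hst).
have cB_gt0 := Pr_Xev_gt0 hst false.
have SBE := sharp_bounds_of_signs Ylo_le_Yhi hst VarXN_gt0.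
split; [split|split|split|split|split].
(* After cancelling the positive factors, each sign condition is a conjunction of
   linear inequalities in [y]. *)
1-8: apply: SBE => [||y /andP[MOBm_le_y y_le_MOBp]] /=;
  rewrite ?le_max ?ge_min ?lexx ?MOBm_le_NM ?NM_le_MOBp ?orbT //;
  rewrite ?pmulr_rge0 ?pmulr_rle0 // ?subr_ge0 ?subr_le0 ?ge_max ?le_min;
  split=> H; repeat match goal with H : is_true (_ && _) |- _ => case/andP: H => ? ?
                                  | H : _ /\ _ |- _ => case: H => ? ? end;
  repeat (apply/andP; split); repeat split; lra.
- by rewrite (deltaW_ER hst VarXN_gt0) => /eqP; rewrite mulf_eq0 gt_eqF //= subr_eq0 => /eqP.
- by rewrite (deltaB_NM hst) => /eqP; rewrite mulf_eq0 gt_eqF //= subr_eq0 => /eqP ->.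
- by move=> dW0 dB0; rewrite (Yx_eq_of_deltas0 hst).
Qed.
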